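(* Let $\mathfrak{g}'\to\mathfrak{g}$ be a nontrivial deformation of finite-dimensional real Lie algebras. If the polynomial $P_T(\mathfrak{g}')-P_T(\mathfrak{g})$ has a negative coefficient, then the deformation is not of plateau type.
   Context: For a finite-dimensional real Lie algebra $\mathfrak{h}$, $b_i(\mathfrak{h})=\dim H^i(\mathfrak{h},\mathbb{R})$ (cohomology with trivial coefficients) and the Poincaré polynomial is $P_T(\mathfrak{h})=1+\sum_{i=1}^{\dim\mathfrak{h}}b_i(\mathfrak{h})T^i$. A deformation $\mathfrak{g}'\to\mathfrak{g}$ is a family $\mathfrak{g}_t$, $t\in[0,1]$, of Lie algebra structures on a fixed vector space, depending continuously on $t$, with $\mathfrak{g}_0=\mathfrak{g}'$ and $\mathfrak{g}_1\cong\mathfrak{g}$; it is nontrivial if $\mathfrak{g}\not\cong\mathfrak{g}'$. It is of plateau type if $\mathfrak{g}_0\not\cong\mathfrak{g}_1$ and $\mathfrak{g}_t\cong\mathfrak{g}_1$ for all $t\in(0,1]$. *)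

From HB Require Import structures.
From mathcomp Require Import all_boot all_order all_algebra all_fingroup.
From mathcomp Require Import all_classical all_reals all_analysis.
Set Implicit Arguments. Unset Strict Implicit. Unset Printing Implicit Defensive.
Import Order.TTheory GRing.Theory Num.Theory numFieldNormedType.Exports.
Local Open Scope ring_scope.

Section LieDefs.
Variable R : realType.

(* A Lie algebra structure on R^n, given by structure constants w.r.t. the
   standard basis e_0..e_{n-1}:  [e_i, e_j] = \sum_k c i j k e_k. *)
Definition sconst (n : nat) := 'I_n -> 'I_n -> 'I_n -> R.

Definition is_lie (n : nat) (c : sconst n) : Prop :=
  (forall i j k, c i j k = - c j i k) /\
  (forall i j k l,
     \sum_(m < n) (c i j m * c m k l + c j k m * c m i l + c k i m * c m j l) = 0).

Definition lbr (n : nat) (c : sconst n) (u v : 'rV[R]_n) : 'rV[R]_n :=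
  \row_k \sum_(i < n) \sum_(j < n) u 0 i * v 0 j * c i j k.

Definition lie_iso (n : nat) (c c' : sconst n) : Prop :=
  exists A : 'M[R]_n, A \in unitmx /\
    forall u v : 'rV[R]_n, lbr c u v *m A = lbr c' (u *m A) (v *m A).

(* An i-cochain is
   a function on i-tuples of basis indices; it corresponds to a multilinear
   map g^i -> R, and the i-cochains of the complex are the alternating ones. *)
Definition cochain (n i : nat) := {ffun {ffun 'I_i -> 'I_n} -> R^o}.

Definition swap_args (n i : nat) (p q : 'I_i) (x : {ffun 'I_i -> 'I_n})
  : {ffun 'I_i -> 'I_n} := [ffun l => x (tperm p q l)].

Definition alt_space (n i : nat) : {vspace cochain n i} :=
  (\bigcap_(pq : 'I_i * 'I_i | (pq.1 < pq.2)%N)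
     lker (linfun (fun f : cochain n i =>
        [ffun x => (f (swap_args pq.1 pq.2 x) + f x)%R] : cochain n i)))%VS.

(* the tuple (m, x_0, ..., \hat{x_j}, ..., \hat{x_k}, ..., x_i) *)
Definition ins_rem (n i : nat) (m : 'I_n) (j k : 'I_i.+1)
  (x : {ffun 'I_i.+1 -> 'I_n}) : {ffun 'I_i -> 'I_n} :=
  [ffun l : 'I_i => if val l == 0%N then m
     else x (nth j [seq a <- enum 'I_i.+1 | (a != j) && (a != k)] (val l).-1)].

Definition ce_diff_fun (n : nat) (c : sconst n) (i : nat) (f : cochain n i)
  : cochain n i.+1 :=
  [ffun x : {ffun 'I_i.+1 -> 'I_n} => \sum_(j < i.+1) \sum_(k < i.+1 | (j < k)%N)
      (-1) ^+ (j + k) * \sum_(m < n) c (x j) (x k) m * f (ins_rem m j k x)].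

Definition ce_diff (n : nat) (c : sconst n) (i : nat)
  : 'Hom(cochain n i, cochain n i.+1) := linfun (@ce_diff_fun n c i).

Definition cocycles (n : nat) (c : sconst n) (i : nat) : {vspace cochain n i} :=
  (alt_space n i :&: lker (ce_diff c i))%VS.

Definition betti (n : nat) (c : sconst n) (i : nat) : nat :=
  match i with
  | 0 => \dim (cocycles c 0)
  | i'.+1 => (\dim (cocycles c i'.+1) - \dim (ce_diff c i' @: alt_space n i'))%N
  end.

Definition poincare (n : nat) (c : sconst n) : {poly int} :=
  1 + \sum_(1 <= i < n.+1) (betti c i)%:Z *: 'X^i.

Definition is_deformation (n : nat) (C : R -> sconst n) (c' c : sconst n) : Prop :=
  (forall t : R, 0 <= t <= 1 -> is_lie (C t)) /\
  (forall i j k, {within [set t : R | 0 <= t <= 1], continuous (fun t : R => C t i j k)}%classic) /\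
  C 0 = c' /\ lie_iso (C 1) c.

Definition plateau (n : nat) (C : R -> sconst n) : Prop :=
  ~ lie_iso (C 0) (C 1) /\ (forall t : R, 0 < t <= 1 -> lie_iso (C t) (C 1)).

End LieDefs.

From HB Require Import structures.
From mathcomp Require Import all_boot all_order all_algebra all_fingroup.
From mathcomp Require Import all_classical all_reals all_analysis.
From mathcomp Require Import ring zify.
Import VectorInternalTheory.
Import Order.TTheory GRing.Theory Num.Theory numFieldNormedType.Exports.
Set Implicit Arguments. Unset Strict Implicit. Unset Printing Implicit Defensive.
Local Open Scope ring_scope.

(* Pulling cochains back along a linear isomorphism that intertwines the
   brackets commutes with the Chevalley--Eilenberg differential, so Betti
   numbers are isomorphism invariants.  Since
   [b_{i+1} = dim Alt^{i+1} - rk d_{i+1} - rk d_i] and the rank of a matrix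
   depending continuously on [t] cannot drop near [t = 0] (a nonzero minor
   stays nonzero), every Betti number of [g_t] is at most the corresponding
   one of [g_0 = g'] for small [t > 0].  For a plateau deformation
   [g_t ~ g] for all [t > 0], hence [b_i(g) <= b_i(g')] for all [i >= 1], so
   [P_T(g') - P_T(g)] has no negative coefficient. *)

Lemma linfunE (K : fieldType) (aT rT : vectType K) (h : aT -> rT) :
  linear h -> linfun h =1 h.
Proof.
move=> hL; pose F : {linear aT -> rT} := HB.pack h (GRing.isLinear.Build K aT rT _ _ hL).
exact: (lfunE F).
Qed.

Section FinSumDelta.
Variables (S : comPzSemiRingType) (T : finType).

Lemma sum_delta_l (y : T) (G : T -> S) : \sum_a (y == a)%:R * G a = G y.
Proof.
rewrite (bigD1 y) //= eqxx mul1r big1 ?addr0 // => a /negbTE.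
by rewrite eq_sym => ->; rewrite mul0r.
Qed.

Lemma sum_delta_r (y : T) (G : T -> S) : \sum_a G a * (a == y)%:R = G y.
Proof.
rewrite (bigD1 y) //= eqxx mulr1 big1 ?addr0 // => a /negbTE ->.
by rewrite mulr0.
Qed.

Lemma prod_if_eq (j : T) (F : T -> S) : \prod_l (if l == j then F l else 1) = F j.
Proof. by rewrite -big_mkcond big_pred1_eq. Qed.

Lemma prod_natr_bool (b : pred T) : \prod_l (b l)%:R = [forall l, b l]%:R :> S.
Proof.
case: forallP => [bT|/existsNP [l /negP /negbTE bl]].
  by rewrite big1 // => l _; rewrite bT.
by rewrite (bigD1 l) //= bl mul0r.
Qed.

End FinSumDelta.

Section Cochains.
Variables (R : realType) (n : nat).
Implicit Types (c : sconst R n) (A : 'M[R]_n).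

Lemma ce_diff_fun_linear c i : linear (@ce_diff_fun R n c i).
Proof.
move=> a f g; apply/ffunP => x; rewrite !ffunE.
have scaleE (y : R^o) : a *: y = a * y by [].
rewrite scaleE mulr_sumr -big_split /=; apply: eq_bigr => j _.
rewrite mulr_sumr -big_split /=; apply: eq_bigr => k _.
rewrite !mulr_sumr -big_split /=; apply: eq_bigr => m _.
rewrite !ffunE scaleE; ring.
Qed.

Lemma ce_diffE c i f : ce_diff c i f = ce_diff_fun c f.
Proof. by rewrite /ce_diff linfunE //; exact: ce_diff_fun_linear. Qed.

Lemma alt_spaceP i (f : cochain R n i) :
  reflect (forall p q : 'I_i, (p < q)%N -> forall x, f (swap_args p q x) = - f x)
    (f \in alt_space R n i).
Proof.
have swap_linear (p q : 'I_i) : linear (fun f : cochain R n i =>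
    [ffun x => f (swap_args p q x) + f x] : cochain R n i).
  move=> a g h; apply/ffunP => x; rewrite !ffunE.
  have scaleE (y : R^o) : a *: y = a * y by [].
  by rewrite !scaleE; ring.
rewrite /alt_space memvE; apply: (iffP subv_bigcapP) => [altf p q pq x | altf [p q] /= pq].
  have := altf (p, q) pq; rewrite -memvE memv_ker linfunE //.
  by move=> /eqP/ffunP/(_ x); rewrite !ffunE => /eqP; rewrite addr_eq0 => /eqP.
rewrite -memvE memv_ker linfunE //; apply/eqP/ffunP => x.
by rewrite !ffunE altf // addNr.
Qed.

Definition cochain_ev i (f : cochain R n i) (v : 'I_i -> 'rV[R]_n) : R :=
  \sum_(y : {ffun 'I_i -> 'I_n}) (\prod_l v l 0 (y l)) * f y.

Lemma eq_cochain_ev i (f : cochain R n i) (v v' : 'I_i -> 'rV[R]_n) :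
  v =1 v' -> cochain_ev f v = cochain_ev f v'.
Proof. by move=> vv'; apply: eq_bigr => y _; under eq_bigr do rewrite vv'. Qed.

Definition pullback i A (f : cochain R n i) : cochain R n i :=
  [ffun x : {ffun 'I_i -> 'I_n} => cochain_ev f (fun l => row (x l) A)].

Lemma pullbackE i A (f : cochain R n i) x :
  pullback A f x = \sum_(y : {ffun 'I_i -> 'I_n}) (\prod_l A (x l) (y l)) * f y.
Proof.
rewrite ffunE; apply: eq_bigr => y _; congr (_ * _).
by apply: eq_bigr => l _; rewrite mxE.
Qed.

Lemma pullback_linear i A : linear (@pullback i A).
Proof.
move=> a f g; apply/ffunP => x; rewrite !ffunE.
have scaleE (y : R^o) : a *: y = a * y by [].
rewrite scaleE /cochain_ev mulr_sumr -big_split /=.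
by apply: eq_bigr => y _; rewrite !ffunE scaleE; ring.
Qed.

Lemma pullbackM i A B (f : cochain R n i) :
  pullback A (pullback B f) = pullback (A *m B) f.
Proof.
apply/ffunP => x; rewrite !pullbackE.
under eq_bigr do rewrite pullbackE mulr_sumr.
rewrite exchange_big /=; apply: eq_bigr => z _.
under eq_bigr do rewrite mulrA -big_split /=.
rewrite -mulr_suml; congr (_ * _).
rewrite -(bigA_distr_bigA (fun l a => A (x l) a * B a (z l))) /=.
by apply: eq_bigr => l _; rewrite mxE.
Qed.

Lemma pullback1 i (f : cochain R n i) : pullback 1%:M f = f.
Proof.
apply/ffunP => x; rewrite pullbackE (bigD1 x) //= [X in _ + X]big1 ?addr0.
  by rewrite big1 ?mul1r // => l _; rewrite mxE eqxx.
move=> y yx; have [l xy] : exists l, x l != y l.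
  apply/existsP; apply: contraR yx; rewrite negb_exists => /forallP xy.
  by apply/eqP/ffunP => l; have := xy l; rewrite negbK => /eqP.
by rewrite (bigD1 l) //= mxE (negbTE xy) !mul0r.
Qed.

Lemma pullback_inj i A : A \in unitmx -> injective (@pullback i A).
Proof.
move=> uA f g fg.
by rewrite -(pullback1 f) -(pullback1 g) -(mulVmx uA) -!pullbackM fg.
Qed.

Lemma swap_argsK i (p q : 'I_i) : involutive (@swap_args n i p q).
Proof. by move=> y; apply/ffunP => l; rewrite !ffunE tpermK. Qed.

Lemma pullback_alt i A (f : cochain R n i) :
  f \in alt_space R n i -> pullback A f \in alt_space R n i.
Proof.
move/alt_spaceP => altf; apply/alt_spaceP => p q pq x.
rewrite !pullbackE (reindex_inj (inv_inj (@swap_argsK i p q))) /= -sumrN.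
apply: eq_bigr => y _; rewrite altf // mulrN; congr (- (_ * _)).
rewrite (reindex_inj (inv_inj (tpermK p q))) /=.
by apply: eq_bigr => l _; rewrite !ffunE !tpermK.
Qed.

End Cochains.

Section OmitTwo.
Variable i : nat.

Definition ord_omit2 (j k : 'I_i) : seq 'I_i :=
  [seq a <- enum 'I_i | (a != j) && (a != k)].

Lemma mem_ord_omit2 (j k l : 'I_i) : (l \in ord_omit2 j k) = (l != j) && (l != k).
Proof. by rewrite mem_filter mem_enum andbT. Qed.

Lemma uniq_ord_omit2 (j k : 'I_i) : uniq (ord_omit2 j k).
Proof. by rewrite filter_uniq // enum_uniq. Qed.

End OmitTwo.

Lemma size_ord_omit2 i (j k : 'I_i.+2) : j != k -> size (ord_omit2 j k) = i.
Proof.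
move=> jk; rewrite /ord_omit2 enumT -/(enum _) -cardE.
have := cardC [pred a : 'I_i.+2 | (a != j) && (a != k)].
have -> : #|[predC [pred a : 'I_i.+2 | (a != j) && (a != k)]]| = #|pred2 j k|.
  by apply: eq_card => a; rewrite !inE negb_and !negbK.
by rewrite card2 jk card_ord addn2 => -[].
Qed.

Section CEFormula.
Variables (R : realType) (n : nat).
Implicit Types (c : sconst R n).

Definition ins_remv i (w : 'rV[R]_n) (j k : 'I_i.+1) (v : 'I_i.+1 -> 'rV[R]_n)
    : 'I_i -> 'rV[R]_n :=
  fun l => if val l == 0%N then w else v (nth j (ord_omit2 j k) (val l).-1).

Section InsRemIndicator.
Variables (i : nat) (c : sconst R n) (j k : 'I_i.+2) (v : 'I_i.+2 -> 'rV[R]_n).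
Variables (w : {ffun 'I_i.+1 -> 'I_n}).
Hypothesis jk : j != k.

Let S := ord_omit2 j k.

Lemma ins_rem_eq_natr m (x : {ffun 'I_i.+2 -> 'I_n}) :
  (ins_rem m j k x == w)%:R =
  (m == w ord0)%:R * \prod_(l' < i) (x (nth j S l') == w (lift ord0 l'))%:R :> R.
Proof.
have -> : (ins_rem m j k x == w) = [forall l, ins_rem m j k x l == w l].
  by apply/eqP/forallP => [-> //|xw]; apply/ffunP => l; apply/eqP/xw.
rewrite -prod_natr_bool big_ord_recl !ffunE /=; congr (_ * _).
by apply: eq_bigr => l _; rewrite ffunE.
Qed.

(* [ins_rem m j k x = w] splits into one test per slot [l] of [x]: the entries
   of [w] that [ins_rem] copies from [x l] must all equal [x l]. *)
Let slot_weight (l : 'I_i.+2) (y : 'I_n) : R :=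
  \prod_(l' < i | nth j S l' == l) (y == w (lift ord0 l'))%:R.
Let slot_value (l : 'I_i.+2) : R :=
  \prod_(l' < i | nth j S l' == l) v l 0 (w (lift ord0 l')).

Lemma prod_slot_weight (x : {ffun 'I_i.+2 -> 'I_n}) :
  \prod_(l' < i) (x (nth j S l') == w (lift ord0 l'))%:R = \prod_l slot_weight l (x l).
Proof.
rewrite (partition_big (fun l' : 'I_i => nth j S l') xpredT) //=.
by apply: eq_bigr => l _; apply: eq_bigr => l' /eqP ->.
Qed.

Lemma prod_slot_value :
  \prod_l slot_value l = \prod_(l' < i) v (nth j S l') 0 (w (lift ord0 l')).
Proof.
rewrite [RHS](partition_big (fun l' : 'I_i => nth j S l') xpredT) //=.
by apply: eq_bigr => l _; apply: eq_bigr => l' /eqP ->.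
Qed.

Lemma slot_weight_out l y : l \notin S -> slot_weight l y = 1.
Proof.
move=> lS; rewrite /slot_weight big_pred0 // => l'.
by apply: contraNF lS => /eqP <-; rewrite mem_nth // size_ord_omit2.
Qed.

Lemma slot_value_out l : l \notin S -> slot_value l = 1.
Proof.
move=> lS; rewrite /slot_value big_pred0 // => l'.
by apply: contraNF lS => /eqP <-; rewrite mem_nth // size_ord_omit2.
Qed.

Lemma sum_slot_weight l : l \in S -> \sum_y v l 0 y * slot_weight l y = slot_value l.
Proof.
move=> lS; have iS : (index l S < i)%N by rewrite -{2}(size_ord_omit2 jk) index_mem.
have slotE (l' : 'I_i) : (nth j S l' == l) = (l' == Ordinal iS).
  apply/eqP/eqP => [slot_l|-> /=]; last by rewrite nth_index.
  apply: val_inj; rewrite /= -slot_l index_uniq ?size_ord_omit2 //.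
  exact: uniq_ord_omit2.
rewrite /slot_value (eq_bigl _ _ slotE) big_pred1_eq.
under eq_bigr do rewrite /slot_weight (eq_bigl _ _ slotE) big_pred1_eq.
exact: sum_delta_r.
Qed.

Let weight (a b : 'I_n) (l : 'I_i.+2) (y : 'I_n) : R :=
  (if l == j then (y == a)%:R else 1) * (if l == k then (y == b)%:R else 1) *
  slot_weight l y.

Lemma sum_weight a b l : \sum_y v l 0 y * weight a b l y =
  (if l == j then v j 0 a else 1) * (if l == k then v k 0 b else 1) * slot_value l.
Proof.
have [-> | lj] := eqVneq l j.
  rewrite slot_value_out ?mem_ord_omit2 ?eqxx // (negbTE jk) !mulr1.
  under eq_bigr do rewrite /weight eqxx (negbTE jk) slot_weight_out ?mem_ord_omit2 ?eqxx //.
  by under eq_bigr do rewrite !mulr1; apply: sum_delta_r.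
have [lk | lk] := eqVneq l k; first subst l.
  rewrite slot_value_out ?mem_ord_omit2 ?eqxx ?andbF // mul1r !mulr1.
  under eq_bigr do
    rewrite /weight eqxx (negbTE lj) slot_weight_out ?mem_ord_omit2 ?eqxx ?andbF //.
  by under eq_bigr do rewrite mul1r mulr1; apply: sum_delta_r.
rewrite !mul1r; under eq_bigr do rewrite /weight (negbTE lj) (negbTE lk) !mul1r.
by apply: sum_slot_weight; rewrite mem_ord_omit2 lj lk.
Qed.

Lemma cochain_ev_ins_rem_indicator :
  \sum_(x : {ffun 'I_i.+2 -> 'I_n}) (\prod_l v l 0 (x l)) *
      \sum_m c (x j) (x k) m * (ins_rem m j k x == w)%:R
  = \prod_l (ins_remv (lbr c (v j) (v k)) j k v l) 0 (w l).
Proof.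
have inner_sumE (x : {ffun 'I_i.+2 -> 'I_n}) :
    \sum_m c (x j) (x k) m * (ins_rem m j k x == w)%:R =
    c (x j) (x k) (w ord0) * \prod_l slot_weight l (x l).
  under [LHS]eq_bigr do rewrite ins_rem_eq_natr mulrA.
  by rewrite -mulr_suml sum_delta_r prod_slot_weight.
have weightE (x : {ffun 'I_i.+2 -> 'I_n}) :
    (\prod_l v l 0 (x l)) * (c (x j) (x k) (w ord0) * \prod_l slot_weight l (x l)) =
    \sum_a \sum_b c a b (w ord0) * \prod_l (v l 0 (x l) * weight a b l (x l)).
  have -> : c (x j) (x k) (w ord0) =
      \sum_a (x j == a)%:R * \sum_b (x k == b)%:R * c a b (w ord0).
    by under eq_bigr do rewrite sum_delta_l; rewrite sum_delta_l.
  rewrite mulr_suml mulr_sumr; apply: eq_bigr => a _.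
  rewrite mulr_sumr mulr_suml mulr_sumr; apply: eq_bigr => b _.
  by rewrite /weight !big_split /= !prod_if_eq; ring.
under [LHS]eq_bigr do rewrite inner_sumE weightE.
rewrite exchange_big; under eq_bigr do rewrite exchange_big.
under eq_bigr do under eq_bigr do
  rewrite -mulr_sumr -(bigA_distr_bigA (fun l y => v l 0 y * weight _ _ l y)) /=.
under eq_bigr do under eq_bigr do
  rewrite (eq_bigr _ (fun l _ => sum_weight _ _ l)) !big_split /= !prod_if_eq.
rewrite prod_slot_value [RHS]big_ord_recl /ins_remv /= mxE mulr_suml.
apply: eq_bigr => a _; rewrite mulr_suml; apply: eq_bigr => b _; ring.
Qed.

End InsRemIndicator.



Lemma cochain_ev_ce_diff i c (f : cochain R n i) (v : 'I_i.+1 -> 'rV[R]_n) :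
  cochain_ev (ce_diff_fun c f) v = \sum_(j < i.+1) \sum_(k < i.+1 | (j < k)%N)
     (-1) ^+ (j + k) * cochain_ev f (ins_remv (lbr c (v j) (v k)) j k v).
Proof.
case: i => [|i] in f v *.
  rewrite big1 => [|j _]; last by rewrite big1 // => k; rewrite !ord1.
  rewrite /cochain_ev big1 // => x _; rewrite ffunE [X in _ * X]big1 ?mulr0 // => j _.
  by rewrite big1 // => k; rewrite !ord1.
rewrite /cochain_ev; under eq_bigr do rewrite ffunE mulr_sumr.
rewrite exchange_big; apply: eq_bigr => j _.
under eq_bigr do rewrite mulr_sumr.
rewrite exchange_big; apply: eq_bigr => k jk.
have {}jk : j != k by rewrite neq_ltn jk.
(* Expanding [f] over indicator cochains reduces to [cochain_ev_ins_rem_indicator]. *)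
have fE (y : {ffun 'I_i.+1 -> 'I_n}) : f y = \sum_w (y == w)%:R * f w.
  by rewrite sum_delta_l.
under eq_bigr do rewrite mulrCA; rewrite -mulr_sumr; congr (_ * _).
under [RHS]eq_bigr => w _ do rewrite -(cochain_ev_ins_rem_indicator c v w jk) mulr_suml.
rewrite exchange_big; apply: eq_bigr => x _.
under [RHS]eq_bigr do rewrite -mulrA mulr_suml.
rewrite -mulr_sumr; congr (_ * _).
rewrite exchange_big; apply: eq_bigr => m _.
by rewrite fE mulr_sumr; apply: eq_bigr => w _; ring.
Qed.

Lemma cochain_ev_ins_remv_sum i (f : cochain R n i.+1) (j k : 'I_i.+2)
    (v : 'I_i.+2 -> 'rV[R]_n) (a : 'I_n -> R) (u : 'I_n -> 'rV[R]_n) :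
  cochain_ev f (ins_remv (\sum_m a m *: u m) j k v) =
  \sum_m a m * cochain_ev f (ins_remv (u m) j k v).
Proof.
rewrite /cochain_ev; under eq_bigr do rewrite big_ord_recl /ins_remv /= summxE.
under [RHS]eq_bigr do rewrite mulr_sumr.
rewrite exchange_big; apply: eq_bigr => y _.
under [RHS]eq_bigr do rewrite big_ord_recl /ins_remv /=.
rewrite !mulr_suml; apply: eq_bigr => m _.
by rewrite !mxE; ring.
Qed.

Lemma lbr_delta c a b : lbr c (delta_mx 0 a) (delta_mx 0 b) = \row_p c a b p.
Proof.
apply/rowP => p; rewrite !mxE.
under eq_bigr do under eq_bigr do rewrite !mxE.
rewrite (bigD1 a) //= [X in _ + X]big1 ?addr0 => [|a' /negbTE na]; last first.
  by rewrite big1 // => b' _; rewrite na !mul0r.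
rewrite (bigD1 b) //= [X in _ + X]big1 ?addr0 => [|b' /negbTE nb]; last first.
  by rewrite nb mulr0 mul0r.
by rewrite !eqxx !mul1r.
Qed.

Lemma pullback_ce_diff i c c' A (f : cochain R n i) :
  (forall u v, lbr c u v *m A = lbr c' (u *m A) (v *m A)) ->
  ce_diff_fun c (pullback A f) = pullback A (ce_diff_fun c' f).
Proof.
move=> hom; apply/ffunP => x; rewrite [RHS]ffunE cochain_ev_ce_diff ffunE.
apply: eq_bigr => j _; apply: eq_bigr => k jk; congr (_ * _).
case: i => [|i] in f x j k jk *; first by move: jk; rewrite !ord1.
have ins_remE m : cochain_ev f (fun l => row (ins_rem m j k x l) A) =
    cochain_ev f (ins_remv (row m A) j k (fun l => row (x l) A)).
  by apply: eq_cochain_ev => l; rewrite /ins_remv ffunE; case: ifP.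
under eq_bigr do rewrite ffunE ins_remE.
rewrite -cochain_ev_ins_remv_sum; congr (cochain_ev f (ins_remv _ j k _)).
rewrite !rowE -!hom lbr_delta mulmx_sum_row.
by apply: eq_bigr => m _; rewrite mxE.
Qed.

End CEFormula.

Section BettiInvariance.
Variables (R : realType) (n : nat).
Implicit Types (c : sconst R n).

Definition ce_rank c i := \dim (ce_diff c i @: alt_space R n i).

Lemma betti_ce_rank c i :
  betti c i.+1 = (\dim (alt_space R n i.+1) - ce_rank c i.+1 - ce_rank c i)%N.
Proof.
rewrite /= /cocycles /ce_rank; congr (_ - _)%N.
by rewrite -[in RHS](limg_ker_dim (ce_diff c i.+1)) addnK.
Qed.

Lemma lie_iso_sym c c' : lie_iso c c' -> lie_iso c' c.
Proof.
case=> A [uA hom]; exists (invmx A); split; first by rewrite unitmx_inv.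
move=> u v; have := hom (u *m invmx A) (v *m invmx A).
by rewrite !mulmxKV // => <-; rewrite mulmxK.
Qed.

Definition pullback_lfun i (A : 'M[R]_n) : 'End(cochain R n i) :=
  linfun (@pullback R n i A).

Lemma pullback_lfunE i A f : pullback_lfun i A f = pullback A f.
Proof. by rewrite linfunE //; exact: pullback_linear. Qed.

Lemma ce_rank_iso_le c c' i : lie_iso c c' -> (ce_rank c' i <= ce_rank c i)%N.
Proof.
case=> A [uA hom]; rewrite /ce_rank.
have pullback_ker0 : lker (pullback_lfun i.+1 A) = 0%VS.
  by apply/eqP/lker0P => f g; rewrite !pullback_lfunE; apply: pullback_inj.
rewrite -(limg_dim_eq (f := pullback_lfun i.+1 A)) ?pullback_ker0 ?capv0 //.
rewrite -limg_comp.
have -> : (pullback_lfun i.+1 A \o ce_diff c' i = ce_diff c i \o pullback_lfun i A)%VF.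
  apply/lfunP => f; rewrite !comp_lfunE !pullback_lfunE !ce_diffE.
  by rewrite (pullback_ce_diff _ hom).
rewrite limg_comp; apply/dimvS/limgS/subvP => _ /memv_imgP [f altf ->].
by rewrite pullback_lfunE; exact: pullback_alt.
Qed.

Lemma betti_iso c c' i : lie_iso c c' -> betti c i.+1 = betti c' i.+1.
Proof.
move=> iso; have iso' := lie_iso_sym iso.
have rank_eq j : ce_rank c j = ce_rank c' j.
  by apply/eqP; rewrite eqn_leq !ce_rank_iso_le.
by rewrite !betti_ce_rank !rank_eq.
Qed.

End BettiInvariance.

Section RankSemicontinuity.
Local Open Scope classical_set_scope.
Context (R : realType) (T : Type) (F : set_system T) {FF : Filter F}.

Lemma cvg_sumr (I : Type) (r : seq I) (P : pred I) (g : I -> T -> R) (a : I -> R) :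
  (forall i, P i -> g i t @[t --> F] --> a i) ->
  \sum_(i <- r | P i) g i t @[t --> F] --> \sum_(i <- r | P i) a i.
Proof. by move=> ga; apply: cvg_big => //; exact: add_continuous. Qed.

Lemma cvg_prodr (I : Type) (r : seq I) (P : pred I) (g : I -> T -> R) (a : I -> R) :
  (forall i, P i -> g i t @[t --> F] --> a i) ->
  \prod_(i <- r | P i) g i t @[t --> F] --> \prod_(i <- r | P i) a i.
Proof.
move=> ga; apply: cvg_big => // -[x y].
by apply: cvgM; [exact: cvg_fst | exact: cvg_snd].
Qed.

Lemma cvg_det m (M : T -> 'M[R]_m) (M0 : 'M[R]_m) :
  (forall i j, M t i j @[t --> F] --> M0 i j) -> \det (M t) @[t --> F] --> \det M0.
Proof.
move=> MM0; apply: cvg_sumr => s _; apply: cvgM; first exact: cvg_cst.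
by apply: cvg_prodr => i _; exact: MM0.
Qed.

Lemma cvg_mulmx p q r s (X : 'M[R]_(p, q)) (M : T -> 'M[R]_(q, r)) (M0 : 'M[R]_(q, r))
    (Y : 'M[R]_(r, s)) :
  (forall i j, M t i j @[t --> F] --> M0 i j) ->
  forall i j, (X *m M t *m Y) i j @[t --> F] --> (X *m M0 *m Y) i j.
Proof.
move=> MM0 i j; rewrite mxE; under eq_fun do rewrite mxE.
apply: cvg_sumr => k _; apply: cvgM; last exact: cvg_cst.
rewrite mxE; under eq_fun do rewrite mxE.
by apply: cvg_sumr => l _; apply: cvgM; [exact: cvg_cst | exact: MM0].
Qed.

(* Some minor of [M0] of size [\rank M0] is invertible, and stays so near [F]. *)
Lemma mxrank_near_ge p q (M : T -> 'M[R]_(p, q)) (M0 : 'M[R]_(p, q)) :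
  (forall i j, M t i j @[t --> F] --> M0 i j) ->
  \forall t \near F, (\rank M0 <= \rank (M t))%N.
Proof.
move=> MM0; set r := \rank M0.
pose X : 'M[R]_(r, p) := pid_mx r *m invmx (col_ebase M0).
pose Y : 'M[R]_(q, r) := invmx (row_ebase M0) *m pid_mx r.
have minor1 : X *m M0 *m Y = 1%:M.
  rewrite /X /Y -[in X in _ *m X *m _](mulmx_ebase M0).
  rewrite !mulmxA mulmxK ?row_ebase_unit // mulmxKV ?col_ebase_unit //.
  by rewrite !pid_mx_id ?rank_leq_row ?rank_leq_col // pid_mx_1.
have := cvgr_neq0 _ (cvg_det (cvg_mulmx (X := X) (Y := Y) MM0)).
rewrite minor1 det1 => /(_ _ (oner_neq0 _)); apply: filterS => t minor_t.
have <- : \rank (X *m M t *m Y) = r by apply: mxrank_unit; rewrite unitmxE unitfE.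
exact: leq_trans (mxrankM_maxl _ _) (mxrankM_maxr _ _).
Qed.

Lemma dim_limg_near_ge (aT rT : vectType R) (L : T -> 'Hom(aT, rT)) (L0 : 'Hom(aT, rT))
    (U : {vspace aT}) :
  (forall u b, v2r (L t u) 0 b @[t --> F] --> v2r (L0 u) 0 b) ->
  \forall t \near F, (\dim (L0 @: U) <= \dim (L t @: U))%N.
Proof.
move=> LL0.
have dimE (f : 'Hom(aT, rT)) : \dim (f @: U) = \rank (vs2mx U *m f2mx f).
  by rewrite unlock /dimv genmxE.
have f2mxE (f : 'Hom(aT, rT)) a b : f2mx f a b = v2r (f (r2v (delta_mx 0 a))) 0 b.
  by rewrite unlock /= !r2vK -rowE mxE.
have entries a b : f2mx (L t) a b @[t --> F] --> f2mx L0 a b.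
  by rewrite f2mxE; under eq_fun do rewrite f2mxE; exact: LL0.
have := mxrank_near_ge (cvg_mulmx (X := vs2mx U) (Y := 1%:M) entries).
by apply: filterS => t; rewrite !dimE !mulmx1.
Qed.

Lemma cvg_v2r_ffun (I : finType) (h : T -> {ffun I -> R^o}) (h0 : {ffun I -> R^o}) b :
  (forall x, h t x @[t --> F] --> h0 x) -> v2r (h t) 0 b @[t --> F] --> v2r h0 0 b.
Proof.
move=> hh0; pose e x : {ffun I -> R^o} := [ffun y => (x == y)%:R].
have v2rE (g : {ffun I -> R^o}) : v2r g 0 b = \sum_x g x * v2r (e x) 0 b.
  have {1}-> : g = \sum_x g x *: e x.
    apply/ffunP => y; rewrite sum_ffunE -[LHS]sum_delta_r.
    by apply: eq_bigr => x _; rewrite !ffunE.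
  by rewrite linear_sum summxE; apply: eq_bigr => x _; rewrite linearZ mxE.
rewrite v2rE; under eq_fun do rewrite v2rE.
by apply: cvg_sumr => x _; apply: cvgM; [exact: hh0 | exact: cvg_cst].
Qed.

End RankSemicontinuity.

Section BettiSemicontinuity.
Local Open Scope classical_set_scope.
Context (R : realType) (n : nat) (T : Type) (F : set_system T) {FF : Filter F}.
Variables (C : T -> sconst R n) (c0 : sconst R n).
Hypothesis C_cvg : forall a b d, C t a b d @[t --> F] --> c0 a b d.

Lemma ce_rank_near_ge i : \forall t \near F, (ce_rank c0 i <= ce_rank (C t) i)%N.
Proof.
apply: dim_limg_near_ge => f b; apply: cvg_v2r_ffun => x.
rewrite ce_diffE ffunE; under eq_fun do rewrite ce_diffE ffunE.
apply: cvg_sumr => j _; apply: cvg_sumr => k _; apply: cvgM; first exact: cvg_cst.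
by apply: cvg_sumr => m _; apply: cvgM; [exact: C_cvg | exact: cvg_cst].
Qed.

Lemma betti_near_le i : \forall t \near F, (betti (C t) i.+1 <= betti c0 i.+1)%N.
Proof.
apply: filterS2 (ce_rank_near_ge i.+1) (ce_rank_near_ge i) => t.
by rewrite !betti_ce_rank; lia.
Qed.

End BettiSemicontinuity.

Section Deformations.
Local Open Scope classical_set_scope.
Variable R : realType.

Let unit_interval : set R := [set t | 0 <= t <= 1].

Lemma near0_in_unit_interval_pos (P : R -> Prop) :
  (\forall t \near within unit_interval (nbhs 0), P t) -> exists t, 0 < t <= 1 /\ P t.
Proof.
move=> /nbhs_ballP [e /= e0 Pe]; pose t := Num.min (e / 2) 1.
have t0 : 0 < t by rewrite lt_min ltr01 andbT divr_gt0.
have t1 : t <= 1 by rewrite ge_min lexx orbT.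
exists t; split; first by rewrite t0 t1.
apply: Pe; last by rewrite /unit_interval /= t1 ltW.
rewrite -ball_normE /ball_ /= sub0r normrN gtr0_norm // gt_min.
by rewrite ltr_pdivrMr // ltr_pMr // ltr1n.
Qed.

Lemma deformation_cvg0 n (C : R -> sconst R n) c' c :
  is_deformation C c' c ->
  forall a b d, C t a b d @[t --> within unit_interval (nbhs 0)] --> c' a b d.
Proof.
move=> [_ [C_cont [<- _]]] a b d.
have := (subspace_continuousP _ _).1 (C_cont a b d) 0.
by apply; rewrite /= lexx ler01.
Qed.

End Deformations.

Lemma poincare_coef_lt0 (R : realType) n (c' c : sconst R n) k :
  (poincare c' - poincare c)`_k < 0 -> exists i, (betti c' i.+1 < betti c i.+1)%N.
Proof.
have -> : (poincare c' - poincare c)`_k =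
    \sum_(1 <= i < n.+1) ((betti c' i)%:Z - (betti c i)%:Z) * (k == i)%:R.
  rewrite coefB /poincare !coefD !coef_sum opprD addrACA subrr add0r -sumrB.
  by apply: eq_bigr => i _; rewrite !coefZ !coefXn mulrBl.
apply: contraPP => /forallNP betti_ge; apply/negP; rewrite -leNgt big_nat_cond.
apply: sumr_ge0 => -[|i] /andP[/andP[i_gt0 _] _] //.
apply: mulr_ge0; last by case: (k == i.+1).
by rewrite subr_ge0 lez_nat leqNgt; apply/negP/betti_ge.
Qed.

Theorem proposition4 (R : realType) (n : nat) (c' c : sconst R n)
  (C : R -> sconst R n) :
  is_lie c' -> is_lie c ->
  is_deformation C c' c ->
  ~ lie_iso c' c ->
  (exists k : nat, (poincare c' - poincare c)`_k < 0) ->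
  ~ plateau C.
Proof.
move=> _ _ deform _ [k /poincare_coef_lt0 [i betti_lt]] [_ iso_C1].
have [t [t01 betti_le]] :=
  near0_in_unit_interval_pos (betti_near_le (deformation_cvg0 deform) i).
have [_ [_ [_ iso1]]] := deform.
move: betti_le; rewrite (betti_iso i (iso_C1 t t01)) (betti_iso i iso1).
by rewrite leqNgt betti_lt.
Qed.
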